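(* Let $k \geq 3$ be an integer and let $A_k$ be a set of positive integers that contains no $k$-term geometric progression. Then \[ d_U(A_k) \leq 1 - \frac{1}{2^k -1} - \frac{2}{5}\left( \frac{1}{5^{k-1} } - \frac{1}{6^{k-1}} \right) - \frac{4}{15}\left( \frac{1}{7^{k-1} } - \frac{1}{10^{k-1}} \right). \]
   Context: A geometric progression of length $k$ with common ratio $r$, where $r \neq 0, \pm 1$ is a real number, is a sequence $(a_0, a_1, \ldots, a_{k-1})$ of nonzero real numbers with $a_i/a_{i-1} = r$ for $i = 1, \ldots, k-1$. A $k$-term geometric progression is a geometric progression of length $k$ with some common ratio $r$. A set contains no $k$-term geometric progression if it does not contain numbers $a_0, \ldots, a_{k-1}$ such that $(a_0, \ldots, a_{k-1})$ is a $k$-term geometric progression. For a set $A$ of positive integers, $A(n)$ denotes the number of $a \in A$ with $a \leq n$, and the upper asymptotic density is $d_U(A) = \limsup_{n \to \infty} A(n)/n$. *)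

From Stdlib Require Import Reals Lra Lia List.
From Coquelicot Require Import Coquelicot.
Open Scope R_scope.

(* A set of positive integers is represented by a boolean predicate on nat
   (membership), together with the hypothesis that all members are >= 1. *)

Definition counting (A : nat -> bool) (n : nat) : nat :=
  List.length (List.filter A (List.seq 1 n)).

Definition upper_density (A : nat -> bool) : Rbar :=
  LimSup_seq (fun n => INR (counting A n) / INR n).

Definition contains_geom_prog (A : nat -> bool) (k : nat) : Prop :=
  exists (a0 r : R),
    a0 <> 0 /\ r <> 0 /\ r <> 1 /\ r <> -1 /\
    forall i : nat, (i < k)%nat ->
      exists m : nat, A m = true /\ INR m = a0 * r ^ i.

From Stdlib Require Import Reals Lra Lia List Classical_Prop.
From Coquelicot Require Import Coquelicot.
Import ListNotations.

(* Pack [1, N] with pairwise disjoint k-term geometric progressions; a set without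
   k-term progressions misses a term of each, so A(N) <= N - (number of progressions).
   Three families are used: for t < T and s odd, 2^(tk) s, ..., 2^(tk+k-1) s (ratio 2),
   disjoint because their 2-adic valuations fill the disjoint windows [tk, tk + k);
   a 3^(k-1), ..., a 5^(k-1) with gcd(a, 10) = 1 and N/6^(k-1) < a <= N/5^(k-1);
   a 5^(k-1), ..., a 7^(k-1) with gcd(a, 30) = 1 and N/10^(k-1) < a <= N/7^(k-1).
   The lower bounds on a keep the two odd families above N/2^(k-1), hence away from the
   odd progressions of the first family.  Their numbers are about
   N (1 - 2^(-kT)) / (2^k - 1), (4/10) N (5^(1-k) - 6^(1-k)) and (8/30) N (7^(1-k) - 10^(1-k));
   divide by N, let N and then T tend to infinity. *)

Open Scope nat_scope.

Lemma pow_pos_nat b n : 0 < b -> 0 < b ^ n.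
Proof. intros Hb. apply Nat.neq_0_lt_0, Nat.pow_nonzero. lia. Qed.

Lemma pow_sub_mul b n m : m <= n -> b ^ n = b ^ (n - m) * b ^ m.
Proof. intros Hmn. rewrite <- Nat.pow_add_r. f_equal. lia. Qed.

Lemma divide_mul_pow_coprime p q x d :
  Nat.gcd p q = 1 -> Nat.divide p (x * q ^ d) -> Nat.divide p x.
Proof.
  intros Hpq. induction d as [|d IH]; intros Hdiv.
  - rewrite Nat.pow_0_r, Nat.mul_1_r in Hdiv. exact Hdiv.
  - apply IH, (Nat.gauss p q); [|exact Hpq].
    rewrite Nat.pow_succ_r' in Hdiv.
    replace (q * (x * q ^ d)) with (x * (q * q ^ d)) by ring. exact Hdiv.
Qed.

Lemma not_divide_mul_pow_pow r a q p e f :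
  ~ Nat.divide r a -> Nat.gcd r q = 1 -> Nat.gcd r p = 1 ->
  ~ Nat.divide r (a * q ^ e * p ^ f).
Proof.
  intros Ha Hq Hp Hdiv. apply Ha, (divide_mul_pow_coprime r q a e Hq).
  exact (divide_mul_pow_coprime r p _ f Hp Hdiv).
Qed.

Lemma pow2_mul_odd_inj x y s s' :
  2 ^ x * (2 * s + 1) = 2 ^ y * (2 * s' + 1) -> x = y /\ s = s'.
Proof.
  revert y. induction x as [|x IH]; intros [|y] E; simpl in E.
  - lia.
  - lia.
  - lia.
  - destruct (IH y) as [-> ->]; lia.
Qed.

Lemma pow_coprime_cancel p q a a' d :
  Nat.gcd p q = 1 -> 0 < d -> q ^ d * a = p ^ d * a' ->
  Nat.divide p a /\ Nat.divide q a'.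
Proof.
  intros Hpq Hd E.
  assert (Hsucc : forall b, b ^ d = b * b ^ (d - 1))
    by (intros b; rewrite <- Nat.pow_succ_r'; f_equal; lia).
  split.
  - apply (divide_mul_pow_coprime p q a d Hpq).
    exists (p ^ (d - 1) * a'). rewrite Nat.mul_comm, E, Hsucc. ring.
  - apply (divide_mul_pow_coprime q p a' d); [rewrite Nat.gcd_comm; exact Hpq|].
    exists (q ^ (d - 1) * a). rewrite Nat.mul_comm, <- E, Hsucc. ring.
Qed.

Definition gp_term (k : nat) (g : nat * nat * nat) (j : nat) : nat :=
  let '(c, q, p) := g in c * q ^ (k - 1 - j) * p ^ j.

Lemma gp_term_ge k c q p j :
  q <= p -> j < k -> c * q ^ (k - 1) <= gp_term k (c, q, p) j.
Proof.
  intros Hqp Hj. simpl. rewrite (pow_sub_mul q (k - 1) j) by lia.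
  rewrite Nat.mul_assoc. apply Nat.mul_le_mono_l, Nat.pow_le_mono_l, Hqp.
Qed.

Lemma gp_term_le k c q p j :
  q <= p -> j < k -> gp_term k (c, q, p) j <= c * p ^ (k - 1).
Proof.
  intros Hqp Hj. simpl. rewrite (pow_sub_mul p (k - 1) j) by lia.
  rewrite Nat.mul_assoc. apply Nat.mul_le_mono_r, Nat.mul_le_mono_l.
  apply Nat.pow_le_mono_l, Hqp.
Qed.

Lemma gp_term_coprime_eq_le q p a a' j j' k :
  Nat.gcd p q = 1 -> 0 < q -> 0 < p -> j <= j' -> j' < k ->
  gp_term k (a, q, p) j = gp_term k (a', q, p) j' ->
  a = a' \/ (Nat.divide p a /\ Nat.divide q a').
Proof.
  intros Hpq Hq Hp Hjj' Hj' E. simpl in E.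
  rewrite (pow_sub_mul p j' j), (pow_sub_mul q (k - 1 - j) (j' - j)) in E by lia.
  replace (k - 1 - j - (j' - j)) with (k - 1 - j') in E by lia.
  set (X := q ^ (k - 1 - j')) in E. set (Y := p ^ j) in E.
  assert (HXY : 0 < X * Y) by (apply Nat.mul_pos_pos; apply pow_pos_nat; lia).
  assert (E' : X * Y * (q ^ (j' - j) * a) = X * Y * (p ^ (j' - j) * a')).
  { transitivity (a * (X * q ^ (j' - j)) * Y); [ring|]. rewrite E. ring. }
  apply Nat.mul_cancel_l in E'; [|lia].
  destruct (Nat.eq_dec j j') as [<-|Hne].
  - left. rewrite Nat.sub_diag, !Nat.pow_0_r in E'. lia.
  - right. apply (pow_coprime_cancel p q a a' (j' - j)); [exact Hpq|lia|exact E'].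
Qed.

Lemma gp_term_coprime_inj q p a a' j j' k :
  Nat.gcd p q = 1 -> 0 < q -> 0 < p -> j < k -> j' < k ->
  (~ Nat.divide p a /\ ~ Nat.divide p a') \/ (~ Nat.divide q a /\ ~ Nat.divide q a') ->
  gp_term k (a, q, p) j = gp_term k (a', q, p) j' -> a = a'.
Proof.
  intros Hpq Hq Hp Hj Hj' Hnd E.
  destruct (Nat.le_ge_cases j j') as [Hle|Hle].
  - destruct (gp_term_coprime_eq_le q p a a' j j' k) as [|[]]; auto. tauto.
  - destruct (gp_term_coprime_eq_le q p a' a j' j k) as [|[]]; auto. tauto.
Qed.

Open Scope R_scope.

Lemma gp_terms_contains_geom_prog A k c q p :
  (0 < c)%nat -> (0 < q < p)%nat ->
  (forall j, (j < k)%nat -> A (gp_term k (c, q, p) j) = true) ->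
  contains_geom_prog A k.
Proof.
  intros Hc Hqp Hin.
  assert (Hq : 0 < INR q) by (apply lt_0_INR; lia).
  assert (Hratio : 1 < INR p / INR q).
  { apply Rmult_lt_reg_r with (INR q); [exact Hq|].
    unfold Rdiv. rewrite Rmult_assoc, Rinv_l, Rmult_1_l, Rmult_1_r by lra.
    apply lt_INR. lia. }
  exists (INR (c * q ^ (k - 1))), (INR p / INR q).
  repeat split; try lra.
  - rewrite mult_INR, pow_INR. apply Rgt_not_eq, Rmult_lt_0_compat, pow_lt; auto.
    apply lt_0_INR. lia.
  - intros i Hi. exists (gp_term k (c, q, p) i). split; [exact (Hin i Hi)|].
    assert (Hsplit : INR q ^ (k - 1) = INR q ^ (k - 1 - i) * INR q ^ i)
      by (rewrite <- pow_add; f_equal; lia).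
    simpl. rewrite !mult_INR, !pow_INR, Hsplit.
    unfold Rdiv. rewrite Rpow_mult_distr, pow_inv. field. apply pow_nonzero. lra.
Qed.

Lemma gp_misses A k c q p :
  ~ contains_geom_prog A k -> (0 < c)%nat -> (0 < q < p)%nat ->
  exists j, (j < k)%nat /\ A (gp_term k (c, q, p) j) = false.
Proof.
  intros HA Hc Hqp. apply NNPP. intros Hall. apply HA.
  apply (gp_terms_contains_geom_prog A k c q p Hc Hqp). intros j Hj.
  destruct (A (gp_term k (c, q, p) j)) eqn:E; [reflexivity|].
  exfalso. apply Hall. exists j. auto.
Qed.

Open Scope nat_scope.

Lemma counting_add_missed_le A N M :
  NoDup M -> (forall x, In x M -> 1 <= x <= N /\ A x = false) ->
  counting A N + length M <= N.
Proof.
  intros HM Hmiss. unfold counting.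
  assert (Hincl : length M <= length (filter (fun x => negb (A x)) (seq 1 N))).
  { apply NoDup_incl_length; [exact HM|]. intros x Hx.
    destruct (Hmiss x Hx) as [Hrange HAx].
    apply filter_In. rewrite in_seq, HAx. split; [lia|reflexivity]. }
  pose proof (filter_length A (seq 1 N)) as Hsplit. rewrite length_seq in Hsplit. lia.
Qed.

Definition gp_fits k N (g : nat * nat * nat) : Prop :=
  let '(c, q, p) := g in 0 < c /\ 0 < q < p /\ c * p ^ (k - 1) <= N.

Definition disjoint_gps k (G : list (nat * nat * nat)) : Prop :=
  forall g g' j j', In g G -> In g' G -> j < k -> j' < k ->
  gp_term k g j = gp_term k g' j' -> g = g'.

Lemma missed_terms_exist A k N G :
  ~ contains_geom_prog A k -> NoDup G -> disjoint_gps k G ->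
  (forall g, In g G -> gp_fits k N g) ->
  exists M, length M = length G /\ NoDup M /\
    forall x, In x M -> A x = false /\
      exists g j, In g G /\ j < k /\ x = gp_term k g j.
Proof.
  intros HA. induction G as [|g G IH]; intros HG Hdisj Hfit.
  - exists []. split; [reflexivity|split; [constructor|intros x []]].
  - inversion HG as [|? ? Hg HG']; subst.
    assert (Hdisj' : disjoint_gps k G)
      by (intros h h' j j' Hh Hh'; apply Hdisj; right; assumption).
    assert (Hfit' : forall h, In h G -> gp_fits k N h)
      by (intros h Hh; apply Hfit; right; exact Hh).
    destruct (IH HG' Hdisj' Hfit') as [M [Hlen [HM HMG]]].
    destruct g as [[c q] p].
    destruct (Hfit (c, q, p) (or_introl eq_refl)) as [Hc [Hqp _]].
    destruct (gp_misses A k c q p HA Hc Hqp) as [j [Hj HAj]].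
    exists (gp_term k (c, q, p) j :: M). split; [|split].
    + simpl. rewrite Hlen. reflexivity.
    + constructor; [|exact HM]. intros Hin.
      destruct (HMG _ Hin) as [_ [h [j' [Hh [Hj' E]]]]].
      apply Hg. replace (c, q, p) with h; [exact Hh|].
      symmetry. apply (Hdisj (c, q, p) h j j'); simpl; auto.
    + intros x [<-|Hx].
      * split; [exact HAj|]. exists (c, q, p), j. simpl. auto.
      * destruct (HMG x Hx) as [HAx [h [j' [Hh [Hj' E]]]]].
        split; [exact HAx|]. exists h, j'. simpl. auto.
Qed.

Lemma counting_add_disjoint_gps_le A k N G :
  ~ contains_geom_prog A k -> NoDup G -> disjoint_gps k G ->
  (forall g, In g G -> gp_fits k N g) ->
  counting A N + length G <= N.
Proof.
  intros HA HG Hdisj Hfit.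
  destruct (missed_terms_exist A k N G HA HG Hdisj Hfit) as [M [Hlen [HM HMG]]].
  rewrite <- Hlen. apply counting_add_missed_le; [exact HM|].
  intros x Hx. destruct (HMG x Hx) as [HAx [[[c q] p] [j [Hg [Hj ->]]]]].
  destruct (Hfit _ Hg) as [Hc [Hqp HN]].
  pose proof (gp_term_ge k c q p j ltac:(lia) Hj).
  pose proof (gp_term_le k c q p j ltac:(lia) Hj).
  pose proof (pow_pos_nat q (k - 1) ltac:(lia)).
  split; [nia|exact HAx].
Qed.

Definition pow2_gp k T N (g : nat * nat * nat) : Prop :=
  exists t s, t < T /\ g = (2 ^ (t * k) * (2 * s + 1), 1, 2) /\
    2 ^ (t * k) * (2 * s + 1) * 2 ^ (k - 1) <= N.

Definition gp35 k N (g : nat * nat * nat) : Prop :=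
  exists a, g = (a, 3, 5) /\ ~ Nat.divide 2 a /\ ~ Nat.divide 5 a /\
    N < a * 6 ^ (k - 1) /\ a * 5 ^ (k - 1) <= N.

Definition gp57 k N (g : nat * nat * nat) : Prop :=
  exists a, g = (a, 5, 7) /\ ~ Nat.divide 2 a /\ ~ Nat.divide 3 a /\ ~ Nat.divide 5 a /\
    N < a * 10 ^ (k - 1) /\ a * 7 ^ (k - 1) <= N.

Definition odd_high_gp k N (g : nat * nat * nat) : Prop :=
  exists a q p, g = (a, q, p) /\ ~ Nat.divide 2 a /\ Nat.gcd 2 q = 1 /\ Nat.gcd 2 p = 1 /\
    q <= p /\ N < a * q ^ (k - 1) * 2 ^ (k - 1).

Lemma pow2_gp_term k t s j :
  gp_term k (2 ^ (t * k) * (2 * s + 1), 1, 2) j = 2 ^ (t * k + j) * (2 * s + 1).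
Proof. simpl. rewrite Nat.pow_1_l, Nat.pow_add_r. ring. Qed.

Lemma pow2_gp_inj k T N g g' j j' :
  j < k -> j' < k -> pow2_gp k T N g -> pow2_gp k T N g' ->
  gp_term k g j = gp_term k g' j' -> g = g'.
Proof.
  intros Hj Hj' [t [s [_ [-> _]]]] [t' [s' [_ [-> _]]]]. rewrite !pow2_gp_term.
  intros E. destruct (pow2_mul_odd_inj _ _ _ _ E) as [Hval ->].
  assert (t = t') as -> by nia. reflexivity.
Qed.

Lemma gp35_odd_high k N g : gp35 k N g -> odd_high_gp k N g.
Proof.
  intros [a [-> [H2 [_ [Hhigh _]]]]]. exists a, 3, 5.
  rewrite <- Nat.mul_assoc, <- Nat.pow_mul_l. repeat split; auto.
Qed.

Lemma gp57_odd_high k N g : gp57 k N g -> odd_high_gp k N g.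
Proof.
  intros [a [-> [H2 [_ [_ [Hhigh _]]]]]]. exists a, 5, 7.
  rewrite <- Nat.mul_assoc, <- Nat.pow_mul_l. repeat split; auto.
Qed.

Lemma pow2_odd_high_disjoint k T N g g' j j' :
  j < k -> j' < k -> pow2_gp k T N g -> odd_high_gp k N g' ->
  gp_term k g j <> gp_term k g' j'.
Proof.
  intros Hj Hj' [t [s [_ [-> Hfit]]]] [a [q [p [-> [Ha [Hq [Hp [Hqp Hhigh]]]]]]]].
  rewrite pow2_gp_term. intros E.
  destruct (Nat.eq_dec (t * k + j) 0) as [Hzero|Hpos].
  - pose proof (gp_term_ge k a q p j' Hqp Hj') as Hge.
    rewrite <- E, Hzero, Nat.pow_0_r, Nat.mul_1_l in Hge.
    assert (t * k = 0) as Htk by lia. rewrite Htk, Nat.pow_0_r, Nat.mul_1_l in Hfit.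
    assert (a * q ^ (k - 1) * 2 ^ (k - 1) <= (2 * s + 1) * 2 ^ (k - 1))
      by (apply Nat.mul_le_mono_r; exact Hge).
    lia.
  - apply (not_divide_mul_pow_pow 2 a q p (k - 1 - j') j' Ha Hq Hp).
    simpl in E. rewrite <- E. exists (2 ^ (t * k + j - 1) * (2 * s + 1)).
    rewrite (pow_sub_mul 2 (t * k + j) 1), Nat.pow_1_r by lia. ring.
Qed.

Lemma gp35_inj k N g g' j j' :
  j < k -> j' < k -> gp35 k N g -> gp35 k N g' ->
  gp_term k g j = gp_term k g' j' -> g = g'.
Proof.
  intros Hj Hj' [a [-> [_ [H5 _]]]] [a' [-> [_ [H5' _]]]] E.
  rewrite (gp_term_coprime_inj 3 5 a a' j j' k); auto; lia.
Qed.

Lemma gp57_inj k N g g' j j' :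
  j < k -> j' < k -> gp57 k N g -> gp57 k N g' ->
  gp_term k g j = gp_term k g' j' -> g = g'.
Proof.
  intros Hj Hj' [a [-> [_ [_ [H5 _]]]]] [a' [-> [_ [_ [H5' _]]]]] E.
  rewrite (gp_term_coprime_inj 5 7 a a' j j' k); auto; lia.
Qed.

(* A common term a 3^x 5^y = b 5^u 7^v forces x = 0 since 3 does not divide b;
   then v = 0 contradicts the size windows of a and b, and v > 0 forces 5 | b. *)
Lemma gp35_gp57_disjoint k N g g' j j' :
  j < k -> j' < k -> gp35 k N g -> gp57 k N g' ->
  gp_term k g j <> gp_term k g' j'.
Proof.
  intros Hj Hj' [a [-> [_ [_ [Ha _]]]]] [b [-> [_ [H3 [H5 [_ Hb]]]]]]. simpl. intros E.
  destruct (Nat.eq_dec (k - 1 - j) 0) as [Hx|Hx].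
  - rewrite Hx, Nat.pow_0_r, Nat.mul_1_r in E. replace j with (k - 1) in E by lia.
    rewrite (pow_sub_mul 5 (k - 1) j') in E by lia.
    assert (E' : 5 ^ (k - 1 - j') * (5 ^ j' * a) = 5 ^ (k - 1 - j') * (7 ^ j' * b)).
    { transitivity (a * (5 ^ (k - 1 - j') * 5 ^ j')); [ring|]. rewrite E. ring. }
    apply Nat.mul_cancel_l in E'; [|apply Nat.pow_nonzero; lia].
    destruct (Nat.eq_dec j' 0) as [->|Hv].
    + rewrite !Nat.pow_0_r in E'.
      assert (6 ^ (k - 1) <= 7 ^ (k - 1)) by (apply Nat.pow_le_mono_l; lia).
      nia.
    + apply H5. apply (pow_coprime_cancel 7 5 a b j'); [reflexivity|lia|exact E'].
  - apply (not_divide_mul_pow_pow 3 b 5 7 (k - 1 - j') j' H3); try reflexivity.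
    rewrite <- E. exists (a * 3 ^ (k - 1 - j - 1) * 5 ^ j).
    rewrite (pow_sub_mul 3 (k - 1 - j) 1), Nat.pow_1_r by lia. ring.
Qed.

Definition packing_gp k T N (g : nat * nat * nat) : Prop :=
  pow2_gp k T N g \/ gp35 k N g \/ gp57 k N g.

Lemma packing_gp_disjoint k T N g g' j j' :
  j < k -> j' < k -> packing_gp k T N g -> packing_gp k T N g' ->
  gp_term k g j = gp_term k g' j' -> g = g'.
Proof.
  intros Hj Hj' Hg Hg' E.
  destruct Hg as [Hg|[Hg|Hg]], Hg' as [Hg'|[Hg'|Hg']].
  - exact (pow2_gp_inj k T N g g' j j' Hj Hj' Hg Hg' E).
  - exfalso. exact (pow2_odd_high_disjoint k T N g g' j j' Hj Hj' Hg (gp35_odd_high k N g' Hg') E).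
  - exfalso. exact (pow2_odd_high_disjoint k T N g g' j j' Hj Hj' Hg (gp57_odd_high k N g' Hg') E).
  - exfalso. exact (pow2_odd_high_disjoint k T N g' g j' j Hj' Hj Hg'
                      (gp35_odd_high k N g Hg) (eq_sym E)).
  - exact (gp35_inj k N g g' j j' Hj Hj' Hg Hg' E).
  - exfalso. exact (gp35_gp57_disjoint k N g g' j j' Hj Hj' Hg Hg' E).
  - exfalso. exact (pow2_odd_high_disjoint k T N g' g j' j Hj' Hj Hg'
                      (gp57_odd_high k N g Hg) (eq_sym E)).
  - exfalso. exact (gp35_gp57_disjoint k N g' g j' j Hj' Hj Hg' Hg (eq_sym E)).
  - exact (gp57_inj k N g g' j j' Hj Hj' Hg Hg' E).
Qed.

Lemma packing_gp_fits k T N g : packing_gp k T N g -> gp_fits k N g.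
Proof.
  intros [[t [s [_ [-> Hfit]]]]|[[a [-> [H2 [_ [_ Hfit]]]]]|[a [-> [H2 [_ [_ [_ Hfit]]]]]]]];
    simpl; repeat split; try lia; try exact Hfit.
  - pose proof (pow_pos_nat 2 (t * k)). lia.
  - destruct a; [exfalso; apply H2; exists 0; reflexivity|lia].
  - destruct a; [exfalso; apply H2; exists 0; reflexivity|lia].
Qed.

Lemma NoDup_flat_map {X Y} (f : X -> list Y) l :
  NoDup l -> (forall x, In x l -> NoDup (f x)) ->
  (forall x y z, In x l -> In y l -> In z (f x) -> In z (f y) -> x = y) ->
  NoDup (flat_map f l).
Proof.
  induction l as [|a l IH]; intros Hl Hf Hdisj; simpl; [constructor|].
  inversion Hl as [|? ? Ha Hl']; subst. apply NoDup_app.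
  - apply Hf. left. reflexivity.
  - apply IH; [exact Hl'| |].
    + intros x Hx. apply Hf. right. exact Hx.
    + intros x y z Hx Hy. apply Hdisj; right; assumption.
  - intros z Hz Hz'. apply in_flat_map in Hz' as [y [Hy Hzy]].
    assert (a = y) as <- by (apply (Hdisj a y z); simpl; auto). contradiction.
Qed.

Definition pow2_gps k T N : list (nat * nat * nat) :=
  flat_map (fun t => map (fun s => (2 ^ (t * k) * (2 * s + 1), 1, 2))
                         (seq 0 (N / 2 ^ (t * k + k))))
           (seq 0 T).

(* The window for s makes every start a = m s + r satisfy N < a D and a E <= N. *)
Definition residue_gps m (rs : list nat) q p D E N : list (nat * nat * nat) :=
  flat_map (fun r => map (fun s => (m * s + r, q, p))
                         (seq (N / (m * D) + 1) (N / (m * E) - (N / (m * D) + 1))))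
           rs.

Definition gps35 k N := residue_gps 10 [1; 3; 7; 9] 3 5 (6 ^ (k - 1)) (5 ^ (k - 1)) N.

Definition gps57 k N :=
  residue_gps 30 [1; 7; 11; 13; 17; 19; 23; 29] 5 7 (10 ^ (k - 1)) (7 ^ (k - 1)) N.

Definition packing k T N := pow2_gps k T N ++ gps35 k N ++ gps57 k N.

Lemma in_pow2_gps k T N g : 1 <= k -> In g (pow2_gps k T N) -> pow2_gp k T N g.
Proof.
  intros Hk Hg. apply in_flat_map in Hg as [t [Ht Hg]].
  apply in_map_iff in Hg as [s [<- Hs]]. apply in_seq in Ht, Hs.
  exists t, s. split; [lia|split; [reflexivity|]].
  assert (Hpow : 2 ^ (t * k + k) = 2 ^ (t * k) * 2 ^ (k - 1) * 2).
  { rewrite <- (Nat.pow_1_r 2) at 4. rewrite <- !Nat.pow_add_r. f_equal. lia. }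
  pose proof (Nat.Div0.mul_div_le N (2 ^ (t * k + k))) as Hdiv.
  set (Q := N / _) in *. rewrite Hpow in Hdiv.
  assert (2 ^ (t * k) * 2 ^ (k - 1) * 2 * (s + 1) <= 2 ^ (t * k) * 2 ^ (k - 1) * 2 * Q)
    by (apply Nat.mul_le_mono_l; lia).
  nia.
Qed.

Lemma residue_window_bounds m r s D E N :
  0 < m -> r < m -> 0 < D -> 0 < E -> N / (m * D) + 1 <= s -> s < N / (m * E) ->
  N < (m * s + r) * D /\ (m * s + r) * E <= N.
Proof.
  intros Hm Hr HD HE Hlo Hhi. split.
  - pose proof (Nat.div_mod N (m * D)). pose proof (Nat.mod_upper_bound N (m * D)).
    assert (m * D * (N / (m * D) + 1) <= m * D * s) by (apply Nat.mul_le_mono_l; lia).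
    nia.
  - pose proof (Nat.Div0.mul_div_le N (m * E)).
    assert (m * E * (s + 1) <= m * E * (N / (m * E))) by (apply Nat.mul_le_mono_l; lia).
    nia.
Qed.

Lemma in_gps35 k N g : In g (gps35 k N) -> gp35 k N g.
Proof.
  intros Hg. apply in_flat_map in Hg as [r [Hr Hg]].
  apply in_map_iff in Hg as [s [<- Hs]]. apply in_seq in Hs.
  assert (Hr' : r = 1 \/ r = 3 \/ r = 7 \/ r = 9) by (simpl in Hr; lia).
  destruct (residue_window_bounds 10 r s (6 ^ (k - 1)) (5 ^ (k - 1)) N)
    as [Hlo Hhi]; try apply pow_pos_nat; try lia.
  exists (10 * s + r). repeat split; auto; intros [z Hz]; lia.
Qed.

Lemma in_gps57 k N g : In g (gps57 k N) -> gp57 k N g.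
Proof.
  intros Hg. apply in_flat_map in Hg as [r [Hr Hg]].
  apply in_map_iff in Hg as [s [<- Hs]]. apply in_seq in Hs.
  assert (Hr' : r = 1 \/ r = 7 \/ r = 11 \/ r = 13 \/ r = 17 \/ r = 19 \/ r = 23 \/ r = 29)
    by (simpl in Hr; lia).
  destruct (residue_window_bounds 30 r s (10 ^ (k - 1)) (7 ^ (k - 1)) N)
    as [Hlo Hhi]; try apply pow_pos_nat; try lia.
  exists (30 * s + r). repeat split; auto; intros [z Hz]; lia.
Qed.

Lemma in_packing k T N g : 1 <= k -> In g (packing k T N) -> packing_gp k T N g.
Proof.
  intros Hk Hg. apply in_app_or in Hg as [Hg|Hg]; [left; apply in_pow2_gps; assumption|].
  apply in_app_or in Hg as [Hg|Hg]; right; [left; apply in_gps35|right; apply in_gps57]; exact Hg.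
Qed.

Lemma residue_gps_NoDup m rs q p D E N :
  0 < m -> NoDup rs -> (forall r, In r rs -> r < m) -> NoDup (residue_gps m rs q p D E N).
Proof.
  intros Hm Hrs Hlt. apply NoDup_flat_map; [exact Hrs| |].
  - intros r _. apply NoDup_map_NoDup_ForallPairs; [|apply seq_NoDup].
    intros s s' _ _ Hst. injection Hst as Hst. apply (Nat.mul_cancel_l _ _ m); lia.
  - intros r r' z Hr Hr' Hz Hz'.
    apply in_map_iff in Hz as [s [<- _]], Hz' as [s' [Hst _]]. injection Hst as Hst.
    symmetry. exact (proj2 (Nat.div_mod_unique m s' s r' r (Hlt r' Hr') (Hlt r Hr) Hst)).
Qed.

Lemma pow2_gps_NoDup k T N : 1 <= k -> NoDup (pow2_gps k T N).
Proof.
  intros Hk. apply NoDup_flat_map; [apply seq_NoDup| |].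
  - intros t _. apply NoDup_map_NoDup_ForallPairs; [|apply seq_NoDup].
    intros s s' _ _ E. injection E as E. pose proof (pow_pos_nat 2 (t * k)). nia.
  - intros t t' z _ _ Hz Hz'.
    apply in_map_iff in Hz as [s [<- _]], Hz' as [s' [E _]]. injection E as E.
    destruct (pow2_mul_odd_inj _ _ _ _ E) as [Htk _].
    apply (Nat.mul_cancel_r _ _ k); lia.
Qed.

Lemma packing_NoDup k T N : 1 <= k -> NoDup (packing k T N).
Proof.
  intros Hk. apply NoDup_app; [|apply NoDup_app|].
  - apply pow2_gps_NoDup, Hk.
  - apply residue_gps_NoDup; [lia|repeat constructor; simpl; lia|simpl; lia].
  - apply residue_gps_NoDup; [lia|repeat constructor; simpl; lia|simpl; lia].
  - intros g H35 H57. apply in_gps35 in H35 as [a [-> _]]. apply in_gps57 in H57 as [b [E _]].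
    discriminate.
  - intros g H2 Hodd. apply in_pow2_gps in H2 as [t [s [_ [-> _]]]]; [|exact Hk].
    apply in_app_or in Hodd as [Hodd|Hodd];
      [apply in_gps35 in Hodd as [a [E _]]|apply in_gps57 in Hodd as [a [E _]]];
      discriminate.
Qed.

Lemma packing_disjoint k T N : 1 <= k -> disjoint_gps k (packing k T N).
Proof.
  intros Hk g g' j j' Hg Hg' Hj Hj'.
  apply (packing_gp_disjoint k T N); auto using in_packing.
Qed.

Lemma residue_gps_length m rs q p D E N :
  length (residue_gps m rs q p D E N) = length rs * (N / (m * E) - (N / (m * D) + 1)).
Proof.
  induction rs as [|r rs IH]; simpl; [reflexivity|].
  rewrite length_app, length_map, length_seq, IH. ring.
Qed.

Lemma pow2_gps_length k T N :
  length (pow2_gps k (S T) N) = length (pow2_gps k T N) + N / 2 ^ (T * k + k).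
Proof.
  unfold pow2_gps. rewrite seq_S, flat_map_app. simpl.
  rewrite length_app, app_nil_r, length_map, length_seq. reflexivity.
Qed.

Open Scope R_scope.

Lemma INR_div_ge N m : (0 < m)%nat -> INR N / INR m - 1 <= INR (N / m).
Proof.
  intros Hm. assert (Hm' : 0 < INR m) by (apply lt_0_INR; exact Hm).
  pose proof (Nat.div_mod N m ltac:(lia)) as Hdm.
  assert (Hrem : INR (N mod m) < INR m) by (apply lt_INR, Nat.mod_upper_bound; lia).
  apply (f_equal INR) in Hdm. rewrite plus_INR, mult_INR in Hdm.
  apply Rmult_le_reg_r with (INR m); [exact Hm'|].
  replace ((INR N / INR m - 1) * INR m) with (INR N - INR m) by (field; lra).
  rewrite Hdm. lra.
Qed.

Lemma INR_div_le N m : (0 < m)%nat -> INR (N / m) <= INR N / INR m.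
Proof.
  intros Hm. assert (Hm' : 0 < INR m) by (apply lt_0_INR; exact Hm).
  pose proof (le_INR _ _ (Nat.Div0.mul_div_le N m)) as Hle. rewrite mult_INR in Hle.
  apply Rmult_le_reg_l with (INR m); [exact Hm'|].
  replace (INR m * (INR N / INR m)) with (INR N) by (field; lra). lra.
Qed.

Lemma INR_sub_ge a b : INR a - INR b <= INR (a - b).
Proof.
  destruct (Nat.le_gt_cases b a) as [Hba|Hab].
  - rewrite minus_INR by exact Hba. lra.
  - replace (a - b)%nat with 0%nat by lia. apply lt_INR in Hab. simpl. lra.
Qed.

Lemma residue_gps_length_ge m rs q p D E N :
  (0 < m)%nat -> (0 < D)%nat -> (0 < E)%nat ->
  INR (length rs) * (INR N / (INR m * INR E) - INR N / (INR m * INR D) - 2)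
  <= INR (length (residue_gps m rs q p D E N)).
Proof.
  intros Hm HD HE. rewrite residue_gps_length, mult_INR.
  apply Rmult_le_compat_l; [apply pos_INR|].
  eapply Rle_trans; [|apply INR_sub_ge]. rewrite plus_INR.
  pose proof (INR_div_ge N (m * E) ltac:(nia)). pose proof (INR_div_le N (m * D) ltac:(nia)).
  rewrite !mult_INR in *. simpl (INR 1). lra.
Qed.

Lemma pow2_gps_length_ge k T N :
  (1 <= k)%nat ->
  INR N * ((1 - (/ 2 ^ k) ^ T) / (2 ^ k - 1)) - INR T <= INR (length (pow2_gps k T N)).
Proof.
  intros Hk. assert (H2k : 1 < 2 ^ k) by (apply Rlt_pow_R1; [lra|lia]).
  induction T as [|T IH].
  - simpl. unfold Rdiv. rewrite Rminus_diag, Rmult_0_l, Rmult_0_r. lra.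
  - rewrite pow2_gps_length, plus_INR, S_INR.
    pose proof (INR_div_ge N (2 ^ (T * k + k)) (pow_pos_nat 2 _ ltac:(lia))) as Hdiv.
    assert (Hpow : INR (2 ^ (T * k + k)) = (2 ^ k) ^ S T).
    { rewrite pow_INR, <- pow_mult. replace (INR 2) with 2 by (simpl; lra). f_equal. lia. }
    rewrite Hpow in Hdiv.
    assert (Hstep : (1 - (/ 2 ^ k) ^ S T) / (2 ^ k - 1)
                    = (1 - (/ 2 ^ k) ^ T) / (2 ^ k - 1) + / (2 ^ k) ^ S T).
    { assert ((2 ^ k) ^ T <> 0) by (apply pow_nonzero; lra).
      rewrite !pow_inv. simpl. field. repeat split; lra. }
    rewrite Hstep. unfold Rdiv in Hdiv |- *. lra.
Qed.

Definition packing_density (k T : nat) : R :=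
  (1 - (/ 2 ^ k) ^ T) / (2 ^ k - 1)
  + 2 / 5 * (1 / 5 ^ (k - 1) - 1 / 6 ^ (k - 1))
  + 4 / 15 * (1 / 7 ^ (k - 1) - 1 / 10 ^ (k - 1)).

Lemma packing_length_ge k T N :
  (1 <= k)%nat ->
  INR N * packing_density k T - (INR T + 24) <= INR (length (packing k T N)).
Proof.
  intros Hk. unfold packing, gps35, gps57. rewrite !length_app, !plus_INR.
  pose proof (pow2_gps_length_ge k T N Hk).
  pose proof (residue_gps_length_ge 10 [1; 3; 7; 9]%nat 3 5 (6 ^ (k - 1)) (5 ^ (k - 1)) N
                ltac:(lia) (pow_pos_nat 6 _ ltac:(lia)) (pow_pos_nat 5 _ ltac:(lia))).
  pose proof (residue_gps_length_ge 30 [1; 7; 11; 13; 17; 19; 23; 29]%nat 5 7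
                (10 ^ (k - 1)) (7 ^ (k - 1)) N
                ltac:(lia) (pow_pos_nat 10 _ ltac:(lia)) (pow_pos_nat 7 _ ltac:(lia))).
  rewrite !pow_INR in *. simpl length in *.
  replace (INR 4) with 4 in * by (simpl; lra).
  replace (INR 5) with 5 in * by (simpl; lra).
  replace (INR 6) with 6 in * by (simpl; lra).
  replace (INR 7) with 7 in * by (simpl; lra).
  replace (INR 8) with 8 in * by (simpl; lra).
  replace (INR 10) with 10 in * by (simpl; lra).
  replace (INR 30) with 30 in * by (simpl; lra).
  assert (1 < 2 ^ k) by (apply Rlt_pow_R1; [lra|lia]).
  assert (5 ^ (k - 1) <> 0) by (apply pow_nonzero; lra).
  assert (6 ^ (k - 1) <> 0) by (apply pow_nonzero; lra).
  assert (7 ^ (k - 1) <> 0) by (apply pow_nonzero; lra).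
  assert (10 ^ (k - 1) <> 0) by (apply pow_nonzero; lra).
  match goal with |- ?L <= _ =>
    replace L with (INR N * ((1 - (/ 2 ^ k) ^ T) / (2 ^ k - 1)) - INR T
                    + 4 * (INR N / (10 * 5 ^ (k - 1)) - INR N / (10 * 6 ^ (k - 1)) - 2)
                    + 8 * (INR N / (30 * 7 ^ (k - 1)) - INR N / (30 * 10 ^ (k - 1)) - 2))
      by (unfold packing_density; field; lra) end.
  lra.
Qed.

Lemma is_lim_seq_add_scal_inv_INR a C : is_lim_seq (fun n => a + C * / INR n) a.
Proof.
  pose proof (is_lim_seq_scal_l _ C _ (is_lim_seq_inv _ _ is_lim_seq_INR ltac:(discriminate)))
    as Hinv.
  simpl in Hinv. rewrite Rmult_0_r in Hinv.
  pose proof (is_lim_seq_plus' _ _ _ _ (is_lim_seq_const a) Hinv) as Hsum.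
  rewrite Rplus_0_r in Hsum. exact Hsum.
Qed.

Lemma upper_density_le_packing A k T :
  (1 <= k)%nat -> ~ contains_geom_prog A k ->
  Rbar_le (upper_density A) (Finite (1 - packing_density k T)).
Proof.
  intros Hk HA.
  pose proof (is_lim_seq_add_scal_inv_INR (1 - packing_density k T) (INR T + 24)) as Hlim.
  unfold upper_density.
  rewrite <- (is_LimSup_seq_unique _ _ (is_lim_LimSup_seq _ _ Hlim)).
  apply LimSup_le. exists 1%nat. intros n Hn.
  assert (Hn' : 0 < INR n) by (apply lt_0_INR; lia).
  pose proof (le_INR _ _ (counting_add_disjoint_gps_le A k n (packing k T n) HA
                (packing_NoDup k T n Hk) (packing_disjoint k T n Hk)
                (fun g Hg => packing_gp_fits k T n g (in_packing k T n g Hk Hg)))) as Hcount.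
  pose proof (packing_length_ge k T n Hk) as Hlen.
  rewrite plus_INR in Hcount.
  apply Rmult_le_reg_r with (INR n); [exact Hn'|].
  unfold Rdiv. rewrite Rmult_plus_distr_r, !Rmult_assoc, Rinv_l by lra. lra.
Qed.

Lemma Rbar_le_of_le_add_geom x b C r :
  0 <= r < 1 -> (forall T, Rbar_le x (Finite (b + C * r ^ T))) -> Rbar_le x (Finite b).
Proof.
  intros Hr Hx.
  assert (Hr' : Rabs r < 1) by (rewrite Rabs_right; lra).
  pose proof (is_lim_seq_scal_l _ C _ (is_lim_seq_geom r Hr')) as Hgeom.
  simpl in Hgeom. rewrite Rmult_0_r in Hgeom.
  pose proof (is_lim_seq_plus' _ _ _ _ (is_lim_seq_const b) Hgeom) as Hlim.
  rewrite Rplus_0_r in Hlim.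
  destruct x as [l| |].
  - exact (is_lim_seq_le (fun _ => l) _ l b Hx (is_lim_seq_const l) Hlim).
  - exact (Hx 0%nat).
  - exact I.
Qed.

Lemma one_sub_packing_density k T :
  (1 <= k)%nat ->
  1 - packing_density k T
  = 1 - 1 / (2 ^ k - 1)
      - 2 / 5 * (1 / 5 ^ (k - 1) - 1 / 6 ^ (k - 1))
      - 4 / 15 * (1 / 7 ^ (k - 1) - 1 / 10 ^ (k - 1))
    + 1 / (2 ^ k - 1) * (/ 2 ^ k) ^ T.
Proof.
  intros Hk. assert (1 < 2 ^ k) by (apply Rlt_pow_R1; [lra|lia]).
  unfold packing_density. field.
  repeat split; try lra; apply pow_nonzero; lra.
Qed.

Theorem corollary1 (k : nat) (A : nat -> bool) :
  (3 <= k)%nat ->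
  (forall m : nat, A m = true -> (1 <= m)%nat) ->
  ~ contains_geom_prog A k ->
  Rbar_le (upper_density A)
    (Finite (1 - 1 / (2 ^ k - 1)
               - 2 / 5 * (1 / 5 ^ (k - 1) - 1 / 6 ^ (k - 1))
               - 4 / 15 * (1 / 7 ^ (k - 1) - 1 / 10 ^ (k - 1)))).
Proof.
  (* [counting] only inspects 1, ..., n. *)
  intros Hk _ HA.
  assert (H2k : 1 < 2 ^ k) by (apply Rlt_pow_R1; [lra|lia]).
  apply (Rbar_le_of_le_add_geom _ _ (1 / (2 ^ k - 1)) (/ 2 ^ k)).
  - split; [left; apply Rinv_0_lt_compat; lra|].
    rewrite <- Rinv_1. apply Rinv_lt_contravar; lra.
  - intros T. rewrite <- one_sub_packing_density by lia.
    apply upper_density_le_packing; [lia|exact HA].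
Qed.
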